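(* Let $\mathbb{W}$ be a subgroup of the finite group $\mathbb{W}_3$ that contains $\mathbb{W}_3^{\mathfrak{A}}$, and let $G$ be a $\mathbb{W}$-invariant finite subgroup of $\mathbb{T}_3$. Then there exists $n\in\mathbb{N}$ such that one of the following three possibilities holds: \begin{enumerate} \item $G\cong\mu_n^3$; \item $n$ is even and $G\cong\mu_{n}^2\times\mu_{\frac{n}{2}}$; \item $n$ is divisible by $4$ and $G\cong\mu_{n}^2\times\mu_{\frac{n}{4}}$. \end{enumerate} Here $\mu_k$ denotes the cyclic group of order $k$.
   Context: Let $M_1=\mathbb{Z}^4/\langle h_1+h_2+h_3+h_4\rangle$ with the action of $\mathfrak{S}_4\times\mu_2$ where $\mathfrak{S}_4$ permutes the $h_i$ and the generator of $\mu_2$ acts as $-\mathrm{id}$. $M_3$ is the dual lattice of $M_1$ with the induced (contragredient) action of $\mathfrak{S}_4\times\mu_2$; equivalently $M_3$ is the root lattice of $A_3$ with its $\mathrm{Aut}(A_3)$-action. The image of this action in $\mathrm{GL}(M_3)\cong\mathrm{GL}_3(\mathbb{Z})$ is $\mathbb{W}_3$, and $\mathbb{W}_3^{\mathfrak{A}}$ is its unique subgroup isomorphic to $\mathfrak{A}_4$ (image of $\mathfrak{A}_4\times\{1\}$). $\mathbb{T}_3=\mathrm{Spec}\,\mathbb{C}[M_3]\cong\mathbb{G}_m^3$, on which $\mathrm{GL}(M_3)$ acts by group automorphisms via its action on characters. Concretely, $\mathbb{T}_3$ is the quotient of $\mathbb{T}_2=\mathbb{G}_m^3$ (coordinates $\mathsf{t}_1,\mathsf{t}_2,\mathsf{t}_3$)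 by the involution $(\mathsf{t}_1,\mathsf{t}_2,\mathsf{t}_3)\mapsto(-\mathsf{t}_1,-\mathsf{t}_2,-\mathsf{t}_3)$, with coordinates $\mathsf{t}_1\mathsf{t}_2,\mathsf{t}_1\mathsf{t}_3,\mathsf{t}_2\mathsf{t}_3$. *)

(* Complex numbers are modelled by algC (algebraic complex
   numbers): every torsion point of (C^x)^3 has algebraic coordinates. *)
From mathcomp Require Import all_boot all_order all_algebra all_fingroup all_field.
Set Implicit Arguments. Unset Strict Implicit. Unset Printing Implicit Defensive.
Import GRing.Theory Num.Theory.
Local Open Scope ring_scope.

(* M_3 = dual of M_1 = sum-zero vectors a in Z^4 (pairing a . x), basis
   b_j = e_j - e_4 (j = 1,2,3); coordinates of a are (a_1,a_2,a_3).
   sigma acts contragrediently: a'_i = a_{sigma^-1 i}, with a_4 = -(a1+a2+a3).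
   Matrices act on column coordinate vectors. *)
Definition i3to4 (j : 'I_3) : 'I_4 := widen_ord (leqnSn 3) j.

Definition rho_perm (s : 'S_4) : 'M[int]_3 :=
  \matrix_(j < 3, k < 3)
    ((((s^-1)%g (i3to4 j) == i3to4 k) : nat)%:Z - (((s^-1)%g (i3to4 j) == ord_max) : nat)%:Z).

(* image of (sigma, eps) in S_4 x mu_2; e = true means eps = -1 acting as -id *)
Definition rhoW (s : 'S_4) (e : bool) : 'M[int]_3 := (-1) ^+ e *: rho_perm s.

Definition W3 : {pred 'M[int]_3} :=
  [pred g | [exists s : 'S_4, exists e : bool, g == rhoW s e]].

Definition W3A : {pred 'M[int]_3} :=
  [pred g | [exists s : 'S_4, (~~ odd_perm s) && (g == rhoW s false)]].

(* C-points of T_3 = Spec C[M_3] = Hom(M_3, C^x), written in the coordinates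
   t_k = t(b_k), as row vectors with nonzero entries. *)
Definition torus_pt (t : 'rV[algC]_3) : bool := [forall k, t 0 k != 0].
Definition tone : 'rV[algC]_3 := const_mx 1.
Definition tmul (t u : 'rV[algC]_3) : 'rV[algC]_3 := \row_k (t 0 k * u 0 k).
Definition tinv (t : 'rV[algC]_3) : 'rV[algC]_3 := \row_k (t 0 k)^-1.

(* action of g in GL(M_3) through its action on characters:
   (g . t)(b_j) = t(g b_j) = prod_k t_k ^ g_{kj} *)
Definition tact (g : 'M[int]_3) (t : 'rV[algC]_3) : 'rV[algC]_3 :=
  \row_j (\prod_k (t 0 k) ^ (g k j)).

Definition finite_subgroup_T3 (G : {pred 'rV[algC]_3}) : Prop :=
  (exists s : seq 'rV[algC]_3, forall t, (t \in G) <-> (t \in s)) /\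
  {subset G <= torus_pt} /\ tone \in G /\
  {in G &, forall t u, tmul t u \in G} /\ {in G, forall t, tinv t \in G}.

Definition subgroup_GL3 (W : {pred 'M[int]_3}) : Prop :=
  1%:M \in W /\ {in W &, forall g h, g *m h \in W} /\ {in W, forall g, invmx g \in W}.

Definition W_invariant (W : {pred 'M[int]_3}) (G : {pred 'rV[algC]_3}) : Prop :=
  forall g t, g \in W -> t \in G -> tact g t \in G.

Definition mu3 (a b c : nat) : {pred 'rV[algC]_3} :=
  [pred t : 'rV[algC]_3 | [forall k : 'I_3, t 0 k ^+ (nth 0%N [:: a; b; c] k) == 1]].

Definition tiso (G H : {pred 'rV[algC]_3}) : Prop :=
  exists f : 'rV[algC]_3 -> 'rV[algC]_3,
    [/\ {in G, forall t, f t \in H},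
        {in G &, injective f},
        (forall u, u \in H -> exists2 t, t \in G & f t = u) &
        {in G &, forall t u, f (tmul t u) = tmul (f t) (f u)}].

(* The coordinates of the points of a finite subgroup G of order N of T_3 are
   N-th roots of unity; writing them as powers of a primitive root z turns G
   into a lattice L of exponent vectors containing N Z^3, and W_3^A-invariance
   of G into A_4-invariance of L. Such a lattice is cut out by d | a, d | b and
   e | a + b + c, where dZ and eZ are the intersections of L with the lines
   spanned by (1, -1, 0) and (0, 0, 1), and d | e | 4d: the only non-formal
   point is that d | a for every (a, b, c) in L, a parity argument modulo d.
   The shear (a, b, c) |-> (a, b, a + b + c) then maps G isomorphically onto
   mu_(N/d)^2 x mu_(N/e), and e / d is 1, 2 or 4. *)

From mathcomp Require Import all_boot all_order all_algebra all_fingroup all_field.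
From mathcomp Require Import zify ring.
Set Implicit Arguments. Unset Strict Implicit. Unset Printing Implicit Defensive.
Import GRing.Theory Num.Theory.
Local Open Scope ring_scope.

Lemma int_subgroup_dvdz (Q : pred int) (N : nat) : (0 < N)%N -> Q N ->
    (forall x y, Q x -> Q y -> Q (x - y)) ->
  exists2 d : nat, (0 < d)%N & forall x, Q x = (d %| x)%Z.
Proof.
move=> N_gt0 QN QB.
have Q0 : Q 0 by rewrite -(subrr N%:Z); apply: QB.
have QN' x : Q x -> Q (- x) by move=> Qx; rewrite -sub0r; apply: QB.
have QD x y : Q x -> Q y -> Q (x + y) by move=> Qx Qy; rewrite -[y]opprK; apply/QB/QN'.
have [d /andP[d_gt0 Qd] d_min] :=
  ex_minnP (ex_intro (fun n => (0 < n)%N && Q n) N (introT andP (conj N_gt0 QN))).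
have Qmul (q : int) : Q (q * d).
  elim/int_rec: q => [|n IH|n IH]; rewrite ?mul0r //.
    by rewrite -addn1 PoszD mulrDl mul1r QD.
  by rewrite -addn1 PoszD opprD mulrDl mulN1r QB.
exists d => // x; apply/idP/idP => [Qx|/dvdzP[q ->] //]; apply/dvdz_mod0P.
have Qr : Q (x %% d)%Z.
  move: (QB _ _ Qx (Qmul (x %/ d)%Z)).
  by rewrite [X in X - _](divz_eq x d) addrAC subrr add0r.
have r_ge0 : 0 <= (x %% d)%Z by rewrite modz_ge0 // eqz_nat -lt0n.
have r_lt : (x %% d)%Z < d by rewrite ltz_pmod.
move: Qr r_ge0 r_lt; case: (x %% d)%Z => // -[|r] // Qr _ r_lt.
by have := d_min r.+1; rewrite Qr => /(_ isT); lia.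
Qed.

Lemma modz_half (d u : int) : 0 < d -> (d %| 2 * u)%Z -> ~~ (d %| u)%Z ->
  2 * (u %% d)%Z = d.
Proof.
move=> d_gt0 d2u ndu.
have r_ge0 : 0 <= (u %% d)%Z by rewrite modz_ge0 // lt0r_neq0.
have r_lt : (u %% d)%Z < d by rewrite ltz_pmod.
have r_neq0 : (u %% d)%Z != 0 by apply: contra ndu => /eqP/dvdz_mod0P.
have /dvdzP[k Ek] : (d %| 2 * (u %% d)%Z)%Z.
  rewrite (_ : 2 * _ = 2 * u - (2 * (u %/ d)%Z) * d); last first.
    by rewrite {2}(divz_eq u d); ring.
  by rewrite rpredB // dvdz_mull.
move: (u %% d)%Z r_neq0 Ek r_ge0 r_lt => r r_neq0 Ek r_ge0 r_lt.
have k_gt0 : 0 < k by rewrite -(pmulr_lgt0 _ d_gt0) -Ek; lia.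
have k_lt2 : k < 2 by rewrite -(ltr_pM2r d_gt0) -Ek; lia.
by rewrite Ek (_ : k = 1) ?mul1r //; lia.
Qed.

Lemma dvdz_sub_of_dvdz_double (d x y : int) : 0 < d ->
  (d %| 2 * x)%Z -> (d %| 2 * y)%Z -> (d %| x)%Z = (d %| y)%Z -> (d %| x - y)%Z.
Proof.
move=> d_gt0 d2x d2y; have [dx /esym dy | ndx ndy] := boolP (d %| x)%Z.
  by rewrite rpredB.
rewrite -eqz_mod_dvd; apply/eqP/(@mulfI _ 2) => //.
by rewrite !modz_half // -ndy.
Qed.

(* [P a b c] encodes membership of (a, b, c, 0) in an A_4-invariant sublattice
   of Z^4 / Z(1, 1, 1, 1): [P_rot] is the 3-cycle of the first three
   coordinates, [P_swap] the double transposition (1 2)(3 4). *)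
Section A4InvariantLattice.

Variables (P : int -> int -> int -> bool) (N : nat).
Hypotheses (N_gt0 : (0 < N)%N) (P_N : P N 0 0)
  (P_sub : forall a b c a' b' c', P a b c -> P a' b' c' -> P (a - a') (b - b') (c - c'))
  (P_rot : forall a b c, P a b c -> P c a b)
  (P_swap : forall a b c, P a b c -> P (b - c) (a - c) (- c)).

Let P_congr a b c a' b' c' : P a b c -> a = a' -> b = b' -> c = c' -> P a' b' c'.
Proof. by move=> ? <- <- <-. Qed.

Let P0 : P 0 0 0.
Proof. by apply: P_congr (P_sub P_N P_N) _ _ _; rewrite subrr. Qed.

Let P_opp a b c : P a b c -> P (- a) (- b) (- c).
Proof. by move=> Pabc; apply: P_congr (P_sub P0 Pabc) _ _ _; rewrite sub0r. Qed.

Let P_add a b c a' b' c' : P a b c -> P a' b' c' -> P (a + a') (b + b') (c + c').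
Proof.
by move=> Pabc /P_opp Pabc'; apply: P_congr (P_sub Pabc Pabc') _ _ _; rewrite opprK.
Qed.

Let P_N12 : P N (- N%:Z) 0.
Proof. by apply: P_congr (P_sub P_N (P_rot P_N)) _ _ _; rewrite ?subr0 ?sub0r. Qed.

Let P_N3 : P 0 0 N.
Proof. exact/P_rot/P_rot. Qed.

Let P_12_13 x : P x (- x) 0 -> P x 0 (- x).
Proof. by move=> /P_rot/P_rot/P_opp/P_congr; apply; rewrite ?opprK ?oppr0. Qed.

Let P_23_12 x : P 0 x (- x) -> P x (- x) 0.
Proof. by move=> /P_rot/P_rot. Qed.

Let P_13_12 x : P x 0 (- x) -> P x (- x) 0.
Proof. by move=> /P_rot/P_opp/P_congr; apply; rewrite ?opprK ?oppr0. Qed.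

Let P12_pair y : P y y 0 -> P y (- y) 0.
Proof.
move=> Pyy; apply/P_23_12/(P_congr (P_sub Pyy (P_rot (P_rot Pyy)))); ring.
Qed.

Let P12_sum a b c : P a b c -> P (a + b - c) (- (a + b - c)) 0.
Proof. by move=> Pabc; apply/P12_pair/(P_congr (P_add Pabc (P_swap Pabc))); ring. Qed.

Let P12_sum0 x y w : P x y w -> x + y + w = 0 -> P x (- x) 0 = P y (- y) 0.
Proof.
move=> + sum0; have -> : w = - x - y by lia.
move=> Pxyw; apply/idP/idP => [/P_12_13 Px | /P_rot Py].
  by apply/P_23_12/(P_congr (P_sub Pxyw Px)); ring.
by apply/P_13_12/(P_congr (P_sub Pxyw Py)); ring.
Qed.

Let P12_sub x y : P x (- x) 0 -> P y (- y) 0 -> P (x - y) (- (x - y)) 0.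
Proof. by move=> Px Py; apply: P_congr (P_sub Px Py) _ _ _; ring. Qed.

Let P3_sub x y : P 0 0 x -> P 0 0 y -> P 0 0 (x - y).
Proof. by move=> Px Py; apply: P_congr (P_sub Px Py) _ _ _; ring. Qed.

Let P_split a b c :
  P a b c -> P a (- a) 0 -> P (a + b) (- (a + b)) 0 -> P 0 0 (a + b + c).
Proof.
move=> Pabc Pa /P_rot Pab.
by apply: P_congr (P_sub (P_sub Pabc Pa) Pab) _ _ _; ring.
Qed.

Let P_join a b c :
  P a (- a) 0 -> P (a + b) (- (a + b)) 0 -> P 0 0 (a + b + c) -> P a b c.
Proof.
move=> Pa /P_rot Pab Pabc.
by apply: P_congr (P_add (P_add Pa Pab) Pabc) _ _ _; ring.
Qed.

Section Generators.

Variables d e : nat.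
Hypotheses (d_gt0 : (0 < d)%N)
  (Pd : forall x, P x (- x) 0 = (d %| x)%Z) (Pe : forall x, P 0 0 x = (e %| x)%Z).

(* Modulo d, a + b - c and its rotations vanish, so 2 (a - c) and 2 (b - a)
   do; [P12_sum0] makes a - c and b - a vanish together, hence they agree. *)
Let P_dvd a b c : P a b c -> (d %| a)%Z.
Proof.
move=> Pabc; have := P12_sum Pabc; have := P12_sum (P_rot Pabc).
have := P12_sum (P_rot (P_rot Pabc)); rewrite !Pd => y2 y3 y1.
have := P12_sum0 (P_sub Pabc (P_rot Pabc)); rewrite !Pd => /(_ ltac:(ring)) eq_dvd.
have D : (d %| (a - c) - (b - a))%Z.
  apply: dvdz_sub_of_dvdz_double eq_dvd; rewrite ?ltz_nat //.
    by rewrite (_ : 2 * _ = (a + b - c) - (b + c - a)); [rewrite rpredB | ring].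
  by rewrite (_ : 2 * _ = (b + c - a) - (c + a - b)); [rewrite rpredB | ring].
rewrite (_ : a = (a + b - c) - ((b + c - a) - (c + a - b)) - ((a - c) - (b - a))).
  by rewrite rpredB // rpredB // rpredB.
ring.
Qed.

Let P_dvdE a b c :
  P a b c = [&& (d %| a)%Z, (d %| b)%Z & (e %| a + b + c)%Z].
Proof.
apply/idP/and3P => [Pabc | [da db dabc]].
  have da := P_dvd Pabc; have db := P_dvd (P_rot (P_rot Pabc)).
  by split=> //; rewrite -Pe P_split ?Pd ?rpredD.
by apply: P_join; rewrite ?Pd ?Pe // rpredD.
Qed.

Lemma A4_lattice_generators :
  [/\ (d %| N)%N, (e %| N)%N, (d %| e)%N, (e %| 4 * d)%N &
      forall a b c, P a b c = [&& (d %| a)%Z, (d %| b)%Z & (e %| a + b + c)%Z]].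
Proof.
split=> //.
- by change (d%:Z %| N%:Z)%Z; rewrite -Pd.
- by change (e%:Z %| N%:Z)%Z; rewrite -Pe.
- by change (d%:Z %| e%:Z)%Z; apply: (@P_dvd _ 0 0); apply/P_rot; rewrite Pe dvdzz.
have /P_12_13/P_swap : P d (- d%:Z) 0 by rewrite Pd dvdzz.
rewrite P_dvdE => /and3P[_ _ e_dvd]; change (e%:Z %| (4 * d)%N%:Z)%Z.
by rewrite PoszM (_ : 4 * d%:Z = 0 - - d%:Z + (d%:Z - - d%:Z) + - - d%:Z) //; ring.
Qed.

End Generators.

Lemma A4_invariant_lattice : exists d e : nat,
  [/\ (d %| N)%N, (e %| N)%N, (d %| e)%N, (e %| 4 * d)%N &
      forall a b c, P a b c = [&& (d %| a)%Z, (d %| b)%Z & (e %| a + b + c)%Z]].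
Proof.
have [d d_gt0 Pd] := @int_subgroup_dvdz (fun x => P x (- x) 0) N N_gt0 P_N12 P12_sub.
have [e _ Pe] := @int_subgroup_dvdz (fun x => P 0 0 x) N N_gt0 P_N3 P3_sub.
by exists d, e; apply: A4_lattice_generators.
Qed.

End A4InvariantLattice.

(* [tcoord4 t i] is the value of the character [t] on e_i - e_4. *)
Definition tcoord4 (t : 'rV[algC]_3) (i : 'I_4) : algC :=
  if (i < 3)%N then t 0 (inord i) else 1.

Lemma prod_tcoord4 (t : 'rV[algC]_3) (i : 'I_4) :
  \prod_(k < 3) t 0 k ^ ((i3to4 k == i) : nat) = tcoord4 t i.
Proof.
rewrite /tcoord4; case: ifP => [i_lt3 | /negbT i_ge3].
  have i_eq : i3to4 (inord i) = i by apply/val_inj; rewrite /= inordK.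
  rewrite (bigD1 (inord i)) //= i_eq eqxx expr1z big1 ?mulr1 // => k k_neq.
  by rewrite -i_eq -val_eqE /= val_eqE (negbTE k_neq) expr0z.
rewrite big1 // => k _; suff /negbTE-> : i3to4 k != i by rewrite expr0z.
by apply: contraNneq i_ge3 => <-; rewrite /= ltn_ord.
Qed.

Lemma tact_rho_perm (s : 'S_4) (t : 'rV[algC]_3) : torus_pt t ->
  tact (rho_perm s) t = \row_j (tcoord4 t (s (i3to4 j)) / tcoord4 t (s ord_max)).
Proof.
move=> /forallP t_neq0; apply/rowP => j; rewrite !mxE.
under eq_bigr => k _ do
  rewrite mxE !(canF_eq (permKV s)) expfzDr // -invr_expz.
by rewrite big_split /= prodfV !prod_tcoord4.
Qed.

Definition row3 (x y w : algC) : 'rV[algC]_3 := \row_(j < 3) nth 1 [:: x; y; w] j.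

Lemma row3_eta (t : 'rV[algC]_3) : t = row3 (t 0 0) (t 0 1) (t 0 2).
Proof.
by apply/rowP => -[[|[|[|j]]] j_lt]; rewrite // mxE; congr (t 0 _); apply: val_inj.
Qed.

Lemma tcoord4_row3 x y w (i : 'I_4) : tcoord4 (row3 x y w) i = nth 1 [:: x; y; w; 1] i.
Proof. by rewrite /tcoord4; case: i => -[|[|[|[|i]]]] i_lt //=; rewrite mxE inordK. Qed.

Lemma torus_pt_row3 x y w : x != 0 -> y != 0 -> w != 0 -> torus_pt (row3 x y w).
Proof. by move=> *; apply/forallP => -[[|[|[|j]]] j_lt]; rewrite mxE. Qed.

Lemma tmul_row3 x y w x' y' w' :
  tmul (row3 x y w) (row3 x' y' w') = row3 (x * x') (y * y') (w * w').
Proof. by apply/rowP => -[[|[|[|j]]] j_lt]; rewrite !mxE. Qed.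

Lemma tinv_row3 x y w : tinv (row3 x y w) = row3 x^-1 y^-1 w^-1.
Proof. by apply/rowP => -[[|[|[|j]]] j_lt]; rewrite !mxE. Qed.

Lemma tone_row3 : tone = row3 1 1 1.
Proof. by apply/rowP => -[[|[|[|j]]] j_lt]; rewrite !mxE. Qed.

Definition rot3 : 'S_4 :=
  (tperm ord0 (@Ordinal 4 2 isT) * tperm ord0 (@Ordinal 4 1 isT))%g.
Definition swap4 : 'S_4 :=
  (tperm ord0 (@Ordinal 4 1 isT) * tperm (@Ordinal 4 2 isT) ord_max)%g.

Lemma rot3_even : ~~ odd_perm rot3.
Proof. by rewrite odd_permM !odd_tperm. Qed.

Lemma swap4_even : ~~ odd_perm swap4.
Proof. by rewrite odd_permM !odd_tperm. Qed.

Lemma tact_rot3 x y w : x != 0 -> y != 0 -> w != 0 ->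
  tact (rho_perm rot3) (row3 x y w) = row3 w x y.
Proof.
move=> x0 y0 w0; rewrite tact_rho_perm ?torus_pt_row3 //.
apply/rowP => -[[|[|[|j]]] j_lt];
  by rewrite !mxE !tcoord4_row3 !permM /tperm !permE //= divr1.
Qed.

Lemma tact_swap4 x y w : x != 0 -> y != 0 -> w != 0 ->
  tact (rho_perm swap4) (row3 x y w) = row3 (y / w) (x / w) w^-1.
Proof.
move=> x0 y0 w0; rewrite tact_rho_perm ?torus_pt_row3 //.
apply/rowP => -[[|[|[|j]]] j_lt];
  by rewrite !mxE !tcoord4_row3 !permM /tperm !permE //= div1r.
Qed.

Lemma expr_size_eq1_of_translation (F : fieldType) (T : eqType) (s : seq T)
    (m : T -> T) (f : T -> F) (x : F) :
  perm_eq (map m s) s -> {in s, forall g, f (m g) = x * f g} ->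
  {in s, forall g, f g != 0} -> x ^+ size s = 1.
Proof.
move=> perm_ms fm f_neq0.
have prod_neq0 : \prod_(g <- s) f g != 0 by rewrite prodf_seq_neq0; apply/allP.
apply: (mulIf prod_neq0); rewrite mul1r -[RHS](perm_big _ perm_ms) big_map.
by rewrite (eq_big_seq _ fm) big_split /= big_const_seq count_predT iter_mulr_1.
Qed.

Lemma prim_root_expr_divn_eq1 (F : fieldType) (N d : nat) (z x : F) :
  N.-primitive_root z -> (d %| N)%N -> x ^+ (N %/ d) = 1 ->
  exists i : nat, x = z ^+ (d * i).
Proof.
move=> z_prim d_dvd x1; have N_gt0 := prim_order_gt0 z_prim.
have d_gt0 : (0 < d)%N by apply: dvdn_gt0 d_dvd.
have := dvdn_prim_root z_prim (dvdn_div d_dvd).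
rewrite divnA // mulKn // => /prim_rootP/(_ x x1)[i ->].
by exists i; rewrite exprM.
Qed.

Lemma expz_divn_eq1 (F : fieldType) (N d : nat) (z : F) (a : int) :
  z ^+ N = 1 -> (d %| N)%N -> (d %| a)%Z -> (z ^ a) ^+ (N %/ d) = 1.
Proof.
move=> zN d_dvd /dvdzP[q ->]; rewrite exprnP exprz_exp -mulrA -PoszM.
by rewrite mulnC divnK // mulrC -exprz_exp -exprnP zN exp1rz.
Qed.

Definition zrow (z : algC) (a b c : int) : 'rV[algC]_3 := row3 (z ^ a) (z ^ b) (z ^ c).

Definition tshear (t : 'rV[algC]_3) : 'rV[algC]_3 :=
  row3 (t 0 0) (t 0 1) (t 0 0 * t 0 1 * t 0 2).

Lemma tshear_tmul t u : tshear (tmul t u) = tmul (tshear t) (tshear u).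
Proof. by rewrite /tshear tmul_row3 !mxE; congr row3; ring. Qed.

Lemma tshear_inj : {in torus_pt &, injective tshear}.
Proof.
move=> t u _ /forallP u_neq0 /rowP tu; rewrite (row3_eta t) (row3_eta u).
have := tu 2; have := tu 1; have := tu 0; rewrite !mxE /= => -> -> t2_u2.
by rewrite (mulfI (mulf_neq0 (u_neq0 0) (u_neq0 1)) t2_u2).
Qed.

Lemma tshear_zrow (z : algC) a b c : z != 0 ->
  tshear (zrow z a b c) = zrow z a b (a + b + c).
Proof. by move=> z_neq0; rewrite /tshear /zrow !mxE /= !expfzDr. Qed.

Section FiniteTorusSubgroup.

Variables (G : {pred 'rV[algC]_3}) (Gs : seq 'rV[algC]_3).
Hypotheses (Gs_uniq : uniq Gs) (memGs : G =i Gs) (G_torus : {subset G <= torus_pt})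
  (G1 : tone \in G) (GM : {in G &, forall t u, tmul t u \in G})
  (GV : {in G, forall t, tinv t \in G}).

Local Notation N := (size Gs).

Lemma G_coord_neq0 t k : t \in G -> t 0 k != 0.
Proof. by move/G_torus; rewrite unfold_in => /forallP. Qed.

Lemma size_G_gt0 : (0 < N)%N.
Proof. by move: G1; rewrite memGs; case: Gs. Qed.

Lemma perm_G_tmul t : t \in G -> perm_eq (map (tmul t) Gs) Gs.
Proof.
move=> Gt; apply: uniq_perm => //.
  rewrite map_inj_uniq // => u v /rowP tu_tv; apply/rowP => j.
  by have := tu_tv j; rewrite !mxE => /mulfI; apply; apply: G_coord_neq0.
move=> u; apply/mapP/idP => [[v Gv ->] | Gu].
  by rewrite -memGs GM // memGs.
exists (tmul (tinv t) u); first by rewrite -memGs GM ?GV // memGs.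
by apply/rowP => j; rewrite !mxE mulrA mulfV ?mul1r // G_coord_neq0.
Qed.

Lemma G_coord_expN t k : t \in G -> t 0 k ^+ N = 1.
Proof.
move=> Gt; apply: (expr_size_eq1_of_translation (f := fun u : 'rV_3 => u 0 k)
  (perm_G_tmul Gt)).
  by move=> u _; rewrite mxE.
by move=> u; rewrite -memGs; apply: G_coord_neq0.
Qed.

Variable z : algC.
Hypothesis z_prim : N.-primitive_root z.

Let z_neq0 : z != 0.
Proof.
apply/eqP=> z0; move: (prim_expr_order z_prim).
by rewrite z0 expr0n eqn0Ngt size_G_gt0 => /esym/eqP; rewrite oner_eq0.
Qed.

Lemma G_zrow t : t \in G -> exists a b c : int, t = zrow z a b c.
Proof.
move=> Gt; rewrite (row3_eta t).
have [a ->] := prim_rootP z_prim (G_coord_expN 0 Gt).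
have [b ->] := prim_rootP z_prim (G_coord_expN 1 Gt).
have [c ->] := prim_rootP z_prim (G_coord_expN 2 Gt).
by exists a, b, c.
Qed.

Hypotheses (G_rot3 : {in G, forall t, tact (rho_perm rot3) t \in G})
  (G_swap4 : {in G, forall t, tact (rho_perm swap4) t \in G}).

Lemma G_exponent_lattice : exists d e : nat,
  [/\ (d %| N)%N, (e %| N)%N, (d %| e)%N, (e %| 4 * d)%N &
      forall a b c, (zrow z a b c \in G) =
        [&& (d %| a)%Z, (d %| b)%Z & (e %| a + b + c)%Z]].
Proof.
apply: (A4_invariant_lattice (P := fun a b c => zrow z a b c \in G) size_G_gt0).
- by rewrite /zrow !expr0z -exprnP (prim_expr_order z_prim) -tone_row3.
- move=> a b c a' b' c' Gabc Gabc'; rewrite /zrow !expfzDr // -!invr_expz.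
  by rewrite -tmul_row3 -tinv_row3 GM ?GV.
- by move=> a b c /G_rot3; rewrite tact_rot3 ?expfz_neq0.
move=> a b c /G_swap4; rewrite tact_swap4 ?expfz_neq0 //.
by rewrite /zrow !expfzDr // -!invr_expz.
Qed.

Variables d e : nat.
Hypotheses (d_dvd : (d %| N)%N) (e_dvd : (e %| N)%N)
  (memG_zrow : forall a b c, (zrow z a b c \in G) =
     [&& (d %| a)%Z, (d %| b)%Z & (e %| a + b + c)%Z]).

Lemma tiso_G_mu3 : tiso G (mu3 (N %/ d) (N %/ d) (N %/ e)).
Proof.
have zN := prim_expr_order z_prim.
exists tshear; split.
- move=> t /[dup] /G_zrow[a [b [c ->]]].
  rewrite memG_zrow tshear_zrow // => /and3P[da db de].
  by rewrite inE; apply/forallP => -[[|[|[|k]]] k_lt]; rewrite // mxE /= expz_divn_eq1.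
- by move=> t u /G_torus Tt /G_torus Tu; apply: tshear_inj.
- move=> u; rewrite inE => /forallP u_mu.
  have [i ui] := prim_root_expr_divn_eq1 z_prim d_dvd (eqP (u_mu 0)).
  have [j uj] := prim_root_expr_divn_eq1 z_prim d_dvd (eqP (u_mu 1)).
  have [l ul] := prim_root_expr_divn_eq1 z_prim e_dvd (eqP (u_mu 2)).
  pose a : int := (d * i)%N; pose b : int := (d * j)%N.
  pose c : int := (e * l)%N%:Z - a - b.
  have sum_el : a + b + c = (e * l)%N by rewrite /c; ring.
  exists (zrow z a b c).
    by rewrite memG_zrow sum_el; apply/and3P; split; apply: dvdn_mulr.
  by rewrite tshear_zrow // sum_el (row3_eta u) ui uj ul.
- by move=> t u _ _; apply: tshear_tmul.
Qed.

End FiniteTorusSubgroup.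

Lemma divn_dvd_cases (N d e : nat) : (0 < N)%N -> (d %| e)%N -> (e %| 4 * d)%N ->
    (e %| N)%N ->
  [\/ N %/ e = N %/ d,
      (2 %| N %/ d)%N /\ N %/ e = N %/ d %/ 2 |
      (4 %| N %/ d)%N /\ N %/ e = N %/ d %/ 4]%N.
Proof.
move=> N_gt0 /dvdnP[k ->] ke_4d ke_N.
have d_gt0 : (0 < d)%N by move: (dvdn_gt0 N_gt0 ke_N); rewrite muln_gt0 => /andP[].
have k_dvd4 : (k %| 4)%N by rewrite -(dvdn_pmul2r d_gt0).
have d_dvd : (d %| N)%N by apply: dvdn_trans ke_N; apply: dvdn_mull.
have k_dvd : (k %| N %/ d)%N by rewrite dvdn_divRL.
rewrite mulnC divnMA.
have : (k \in [:: 1; 2; 4])%N.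
  move: k_dvd4 (dvdn_leq (isT : (0 < 4)%N) k_dvd4).
  by case: k {d_dvd k_dvd ke_4d ke_N} => [|[|[|[|[|]]]]].
by rewrite !inE => /or3P[] /eqP k_eq; rewrite k_eq ?divn1 in k_dvd *; constructor.
Qed.

Theorem corollary7p3 (W : {pred 'M[int]_3}) (G : {pred 'rV[algC]_3}) :
  subgroup_GL3 W -> (forall g, g \in W -> g \in W3) -> (forall g, g \in W3A -> g \in W) ->
  finite_subgroup_T3 G -> W_invariant W G ->
  exists n : nat, (0 < n)%N /\
    [\/ tiso G (mu3 n n n),
        (2 %| n)%N /\ tiso G (mu3 n n (n %/ 2)) |
        (4 %| n)%N /\ tiso G (mu3 n n (n %/ 4))].
Proof.
move=> _ _ W3A_W [[s memGs] [G_torus [G1 [GM GV]]]] W_G.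
have G_even p : ~~ odd_perm p -> {in G, forall t, tact (rho_perm p) t \in G}.
  move=> p_even t Gt; have /W_G/(_ Gt) : rhoW p false \in W.
    by apply: W3A_W; apply/existsP; exists p; rewrite p_even eqxx.
  by rewrite /rhoW expr0 scale1r.
have {}memGs : G =i undup s by move=> t; rewrite mem_undup; apply/idP/idP => /memGs.
have N_gt0 := size_G_gt0 memGs G1.
have [z z_prim] := C_prim_root_exists N_gt0.
have [d [e [d_dvd e_dvd d_dvd_e e_dvd_4d memG_zrow]]] :=
  G_exponent_lattice memGs G1 GM GV z_prim
    (G_even _ rot3_even) (G_even _ swap4_even).
have G_iso :=
  tiso_G_mu3 (undup_uniq s) memGs G_torus G1 GM GV z_prim d_dvd e_dvd memG_zrow.
exists (size (undup s) %/ d)%N; split.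
  by rewrite divn_gt0 ?(dvdn_gt0 N_gt0 d_dvd) // dvdn_leq.
move: G_iso; have [-> | [n2 ->] | [n4 ->]] := divn_dvd_cases N_gt0 d_dvd_e e_dvd_4d e_dvd.
- by move=> G_iso; apply: Or31.
- by move=> G_iso; apply: Or32.
- by move=> G_iso; apply: Or33.
Qed.
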